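(* In the optimal solution of the Sum Throughput Maximization Problem (STMP) defined in the context, for each user $i$ either the energy causality constraint $B_i+C_i\tau_0+C_i\sum_{j=1}^{N}a_{ji}\tau_j+C_i\tau_i-P_i\tau_i\ge 0$ or the constraint $P_i\le P_{max}$ is satisfied with equality; i.e., the user either transmits with maximum transmit power $P_{max}$ or consumes all the energy available to it until the completion of its transmission.
   Context: There are $N$ users, indexed $i=1,\dots,N$, transmitting to a hybrid access point by time division within a scheduling frame of normalized length $1$. Given constants: bandwidth $W>0$; for each user $i$, $k_i>0$, an energy harvesting rate $C_i\ge 0$, an initial battery level $B_i\ge 0$; and a maximum transmit power $P_{max}>0$. STMP is the problem maximize $\sum_{i=1}^{N} W\tau_i\log_2(1+k_iP_i)$ subject to, for all users $i$ (and all $j\neq i$ where relevant): $B_i+C_i\tau_0+C_i\sum_{j=1}^{N}a_{ji}\tau_j+C_i\tau_i-P_i\tau_i\ge 0$ (energy causality), $a_{ij}+a_{ji}=1$, $P_i\le P_{max}$, $\sum_{i=0}^{N}\tau_i\le 1$, over variables $P_i\ge 0$, $\tau_i\ge 0$ ($i=1,\dots,N$), $\tau_0\ge 0$, and $a_{ij}\in\{0,1\}$, where $P_i$ is the transmit power of user $i$, $\tau_i$ its transmission time, $a_{ij}=1$ iff user $i$ is scheduled before user $j$, and $\tau_0$ is an initial waiting time during which all users only harvest energy. *)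

From HB Require Import structures.
From mathcomp Require Import all_boot all_order all_algebra.
From mathcomp Require Import reals exp.
Set Implicit Arguments. Unset Strict Implicit. Unset Printing Implicit Defensive.
Import Order.TTheory GRing.Theory Num.Theory.
Local Open Scope ring_scope.

Section STMP.
Variables (R : realType) (N : nat).

Definition log2 (x : R) : R := ln x / ln 2.

Definition stmp_obj (W : R) (k : 'I_N -> R) (P tau : 'I_N -> R) : R :=
  \sum_(i < N) W * tau i * log2 (1 + k i * P i).

(* Energy available to user i minus energy consumed, i.e. the LHS of the
   energy causality constraint
   B_i + C_i tau_0 + C_i sum_{j<>i} a_{ji} tau_j + C_i tau_i - P_i tau_i. *)
Definition energy_slack (B C : 'I_N -> R) (P tau : 'I_N -> R) (tau0 : R)
    (a : 'I_N -> 'I_N -> bool) (i : 'I_N) : R :=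
  B i + C i * tau0 + C i * (\sum_(j < N | j != i) (a j i)%:R * tau j)
  + C i * tau i - P i * tau i.

Definition stmp_feasible (B C : 'I_N -> R) (Pmax : R)
    (P tau : 'I_N -> R) (tau0 : R) (a : 'I_N -> 'I_N -> bool) : Prop :=
  [/\ (forall i, 0 <= P i /\ P i <= Pmax),
      (forall i, 0 <= tau i) /\ 0 <= tau0,
      tau0 + \sum_(i < N) tau i <= 1,
      (forall i j, i != j -> (a i j)%:R + (a j i)%:R = 1 :> R)
    & (forall i, 0 <= energy_slack B C P tau tau0 a i)].

Definition stmp_optimal (W : R) (k B C : 'I_N -> R) (Pmax : R)
    (P tau : 'I_N -> R) (tau0 : R) (a : 'I_N -> 'I_N -> bool) : Prop :=
  stmp_feasible B C Pmax P tau tau0 a /\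
  forall P' tau' tau0' a',
    stmp_feasible B C Pmax P' tau' tau0' a' ->
    stmp_obj W k P' tau' <= stmp_obj W k P tau.

End STMP.

From HB Require Import structures.
From mathcomp Require Import all_boot all_order all_algebra.
From mathcomp Require Import reals exp.
From mathcomp Require Import ring.
Set Implicit Arguments. Unset Strict Implicit. Unset Printing Implicit Defensive.
Import Order.TTheory GRing.Theory Num.Theory.
Local Open Scope ring_scope.

(* If user i transmits for a positive time, has spare energy and is below
   [Pmax], raising its power by a small enough [d > 0] keeps every constraint
   (only user i's own energy budget involves [P i], and it shrinks by
   [d * tau i]) while strictly increasing its rate, since [log2] is strictly
   increasing.  This contradicts optimality. *)

Section RaisePower.
Variables (R : realType) (N : nat).
Implicit Types (P tau k B C : 'I_N -> R) (a : 'I_N -> 'I_N -> bool).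

Lemma log2_lt (x y : R) : 0 < x -> x < y -> log2 x < log2 y.
Proof.
move=> x0 xy; have ln2 : 0 < ln (2 : R) by apply: ln_gt0; rewrite ltr1n.
rewrite /log2 ltr_pM2r ?invr_gt0 // ltr_ln // posrE //.
exact: lt_trans xy.
Qed.

Definition raise_power P (i : 'I_N) (d : R) : 'I_N -> R :=
  fun j => if j == i then P i + d else P j.

Lemma raise_power_at P i d : raise_power P i d i = P i + d.
Proof. by rewrite /raise_power eqxx. Qed.

Lemma raise_power_neq P i d j : j != i -> raise_power P i d j = P j.
Proof. by rewrite /raise_power => /negbTE ->. Qed.

Lemma energy_slack_raise_power B C P tau (tau0 : R) a i d :
  energy_slack B C (raise_power P i d) tau tau0 a i =
  energy_slack B C P tau tau0 a i - d * tau i.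
Proof. by rewrite /energy_slack raise_power_at; ring. Qed.

Lemma energy_slack_raise_power_neq B C P tau (tau0 : R) a i d j : j != i ->
  energy_slack B C (raise_power P i d) tau tau0 a j =
  energy_slack B C P tau tau0 a j.
Proof. by move=> ji; rewrite /energy_slack raise_power_neq. Qed.

Lemma stmp_feasible_raise_power B C Pmax P tau (tau0 : R) a i d :
  stmp_feasible B C Pmax P tau tau0 a ->
  0 <= d -> d <= Pmax - P i -> d * tau i <= energy_slack B C P tau tau0 a i ->
  stmp_feasible B C Pmax (raise_power P i d) tau tau0 a.
Proof.
move=> [HP ? ? ? Hen] d0 dP dE; split => // j.
- have [->|ji] := eqVneq j i; last by rewrite raise_power_neq //; exact: HP.
  rewrite raise_power_at -lerBrDl; split => //.
  by rewrite addr_ge0 // (proj1 (HP i)).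
- have [->|ji] := eqVneq j i; last by rewrite energy_slack_raise_power_neq.
  by rewrite energy_slack_raise_power subr_ge0.
Qed.

Lemma stmp_obj_raise_power W k P tau i d :
  0 < W -> 0 < k i -> 0 <= P i -> 0 < tau i -> 0 < d ->
  stmp_obj W k P tau < stmp_obj W k (raise_power P i d) tau.
Proof.
move=> W0 k0 P0 t0 d0; rewrite /stmp_obj (bigD1 i) //= [X in _ < X](bigD1 i) //=.
under [X in _ < _ + X]eq_bigr => j ji do rewrite raise_power_neq //.
rewrite ltrD2r raise_power_at ltr_pM2l ?mulr_gt0 //.
apply: log2_lt; first by rewrite ltr_wpDr // mulr_ge0 // ltW.
by rewrite ltrD2l ltr_pM2l // ltrDl.
Qed.

End RaisePower.

Theorem lemma4 (R : realType) (N : nat) (W : R) (k B C : 'I_N -> R) (Pmax : R)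
    (P tau : 'I_N -> R) (tau0 : R) (a : 'I_N -> 'I_N -> bool) :
  0 < W -> (forall i, 0 < k i) -> (forall i, 0 <= C i) ->
  (forall i, 0 <= B i) -> 0 < Pmax ->
  stmp_optimal W k B C Pmax P tau tau0 a ->
  forall i : 'I_N, 0 < tau i ->
    energy_slack B C P tau tau0 a i = 0 \/ P i = Pmax.
Proof.
move=> W0 k0 _ _ _ [feas opt] i ti0.
have [|s_neq0] := eqVneq (energy_slack B C P tau tau0 a i) 0; first by left.
have [|P_neq] := eqVneq (P i) Pmax; first by right.
have [HP _ _ _ Hen] := feas.
set s := energy_slack B C P tau tau0 a i in s_neq0.
have s_gt0 : 0 < s by rewrite lt_def s_neq0 Hen.
have P_lt : P i < Pmax by rewrite lt_def eq_sym P_neq (proj2 (HP i)).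
pose d := Num.min (Pmax - P i) (s / tau i).
have d_gt0 : 0 < d by rewrite lt_min subr_gt0 P_lt divr_gt0.
have feas' : stmp_feasible B C Pmax (raise_power P i d) tau tau0 a.
  apply: stmp_feasible_raise_power => //; first exact: ltW.
    by rewrite ge_min lexx.
  by rewrite -ler_pdivlMr // ge_min lexx orbT.
have := opt _ _ _ _ feas'; rewrite leNgt => /negP[].
exact: stmp_obj_raise_power W0 (k0 i) (proj1 (HP i)) ti0 d_gt0.
Qed.
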